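(* If $r\ge 10$ is an integer, then $\rho_2(K(3r-3,r))=3$.
   Context: For integers $n\ge 2r$, the Kneser graph $K(n,r)$ has as vertices the $r$-element subsets of $[n]=\{1,\dots,n\}$, two vertices being adjacent iff they are disjoint. A $2$-packing of a graph $G$ is a set of vertices that are pairwise at distance at least $3$ in $G$ (equivalently, no two are adjacent and no two have a common neighbor); $\rho_2(G)$ is the maximum cardinality of a $2$-packing. *)

From mathcomp Require Import all_boot.
Set Implicit Arguments. Unset Strict Implicit. Unset Printing Implicit Defensive.

(* Kneser graph K(n,r): vertices are the r-element subsets of 'I_n
   (i.e. of {0,...,n-1}, in bijection with [n]); two vertices are
   adjacent iff they are disjoint. *)
Definition kneser_vertex (n r : nat) (A : {set 'I_n}) : bool := #|A| == r.

Definition kneser_adj (n r : nat) (A B : {set 'I_n}) : bool :=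
  [&& kneser_vertex r A, kneser_vertex r B & [disjoint A & B]].

(* A 2-packing of K(n,r): a set of vertices, pairwise at distance >= 3,
   i.e. no two distinct members adjacent, and no two distinct members
   with a common neighbour. *)
Definition kneser_2packing (n r : nat) (P : {set {set 'I_n}}) : Prop :=
  (forall A, A \in P -> kneser_vertex r A) /\
  (forall A B, A \in P -> B \in P -> A != B ->
     ~~ kneser_adj r A B /\
     (forall C : {set 'I_n}, ~~ (kneser_adj r A C && kneser_adj r C B))).

Definition kneser_rho2_eq (n r k : nat) : Prop :=
  (exists P : {set {set 'I_n}}, kneser_2packing r P /\ #|P| = k) /\
  (forall P, kneser_2packing (n:=n) r P -> #|P| <= k).

From mathcomp Require Import all_boot.
From mathcomp Require Import zify.
Set Implicit Arguments. Unset Strict Implicit. Unset Printing Implicit Defensive.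

(* Two r-sets A, B of [n] have a common neighbour in K(n,r) iff r <= n - |A u B|,
   i.e. iff |A n B| + n >= 3r.  So in K(3r-3,r) the members of a 2-packing
   pairwise meet in 1 or 2 points, and four r-sets with pairwise meets of size
   at most 2 cover at least 4r - 12 > 3r - 3 points once r >= 10.  Conversely
   the three "consecutive" r-intervals [0,r), [r-1,2r-1), [2r-2,3r-3) u {0}
   pairwise meet in exactly one point. *)

Lemma card_interval n a b : b <= n -> #|[set i : 'I_n | a <= i < b]| = b - a.
Proof.
move=> le_bn.
rewrite -[b - a]muln1 -sum_nat_const_nat (big_nat_widenl _ 0) // (big_nat_widen _ _ n) //.
by rewrite big_mkord -sum1_card; apply: eq_bigl => i; rewrite inE /=; lia.
Qed.

Lemma exists_subset_of_card (T : finType) (A : {set T}) k :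
  k <= #|A| -> exists2 B : {set T}, B \subset A & #|B| = k.
Proof.
move/card_geqP=> [s [uniq_s size_s sAs]]; exists [set x in s].
  by apply/subsetP=> x; rewrite inE; apply: sAs.
by rewrite cardsE (card_uniqP uniq_s).
Qed.

Lemma leq_card_setI_bigcup (T : finType) (A : {set T}) (s : seq {set T}) :
  #|A :&: \bigcup_(B <- s) B| <= \sum_(B <- s) #|A :&: B|.
Proof.
elim: s => [|B s IHs]; first by rewrite !big_nil setI0 cards0.
rewrite !big_cons setIUr; apply: leq_trans (leq_of_leqif (leq_card_setU _ _)) _.
by rewrite leq_add2l.
Qed.

Lemma leq_sum_card_bigcup (T : finType) (s : seq {set T}) k :
  uniq s -> {in s &, forall A B, A != B -> #|A :&: B| <= k} ->
  \sum_(A <- s) #|A| <= #|\bigcup_(A <- s) A| + k * 'C(size s, 2).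
Proof.
elim: s => [|A s IHs] /=; first by rewrite !big_nil.
move=> /andP[As uniq_s] meet_le.
have meet_le_s : {in s &, forall B C, B != C -> #|B :&: C| <= k}.
  by move=> B C Bs Cs; apply: meet_le; rewrite inE ?Bs ?Cs orbT.
have meetA : #|A :&: \bigcup_(B <- s) B| <= k * size s.
  apply: leq_trans (leq_card_setI_bigcup A s) _.
  rewrite -[size s]count_predT -iter_addn_0 -big_const_seq !big_seq.
  apply: leq_sum => B Bs; apply: meet_le; rewrite ?inE ?Bs ?eqxx ?orbT //.
  by apply: contraNneq As => ->.
have := IHs uniq_s meet_le_s; have := cardsUI A (\bigcup_(B <- s) B).
rewrite !big_cons binS bin1; lia.
Qed.

Definition kneser_far n r (A B : {set 'I_n}) : Prop :=
  ~~ kneser_adj r A B /\ forall C, ~~ (kneser_adj r A C && kneser_adj r C B).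

Lemma kneser_common_nbrP n r (A B : {set 'I_n}) : #|A| = r -> #|B| = r ->
  (exists C, kneser_adj r A C && kneser_adj r C B) <-> r <= #|~: (A :|: B)|.
Proof.
move=> cardA cardB; rewrite /kneser_adj /kneser_vertex cardA cardB setCU; split.
  move=> [C /andP[/and3P[_ /eqP <- dAC] /and3P[_ _ dCB]]]; apply: subset_leq_card.
  by rewrite subsetI -disjoints_subset disjoint_sym dAC -disjoints_subset.
move=> /exists_subset_of_card[C]; rewrite subsetI => /andP[sCA sCB] cardC.
exists C; rewrite cardC eqxx /= disjoint_sym !disjoints_subset.
by rewrite sCA sCB.
Qed.

Lemma kneser_farP n r (A B : {set 'I_n}) : #|A| = r -> #|B| = r ->
  kneser_far r A B <-> A :&: B != set0 /\ #|A :&: B| + n < 3 * r.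
Proof.
move=> cardA cardB; rewrite /kneser_far.
have -> : ~~ kneser_adj r A B = (A :&: B != set0).
  by rewrite /kneser_adj /kneser_vertex cardA cardB eqxx setI_eq0.
have no_nbr : (forall C, ~~ (kneser_adj r A C && kneser_adj r C B))
              <-> #|A :&: B| + n < 3 * r.
  have := cardsC (A :|: B); have := cardsUI A B; rewrite card_ord cardA cardB.
  split=> [no_C | lt_r].
    suff : ~ r <= #|~: (A :|: B)| by lia.
    by move/(kneser_common_nbrP cardA cardB)=> [C]; apply/negP/no_C.
  move=> C; apply/negP=> adjC; suff : r <= #|~: (A :|: B)| by lia.
  by apply/(kneser_common_nbrP cardA cardB); exists C.
by rewrite no_nbr.
Qed.

Lemma kneser_2packingP n r (P : {set {set 'I_n}}) :
  kneser_2packing r P <->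
  (forall A, A \in P -> kneser_vertex r A) /\
  {in P &, forall A B, A != B -> A :&: B != set0 /\ #|A :&: B| + n < 3 * r}.
Proof.
rewrite /kneser_2packing; split=> -[vertP farP]; split=> // A B AP BP AB.
all: by apply/kneser_farP; [exact/eqP/vertP | exact/eqP/vertP | exact: farP].
Qed.

Lemma kneser_2packing_card_le3 r (P : {set {set 'I_(3 * r - 3)}}) :
  9 < r -> kneser_2packing r P -> #|P| <= 3.
Proof.
move=> r_gt9 /kneser_2packingP[vertP meetP]; rewrite leqNgt.
apply/negP=> /card_geqP[s [uniq_s size_s sPs]].
have meet_le2 : {in s &, forall A B, A != B -> #|A :&: B| <= 2}.
  by move=> A B As Bs AB; have [_] := meetP A B (sPs _ As) (sPs _ Bs) AB; lia.
have sum_r : \sum_(A <- s) #|A| = 4 * r.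
  rewrite (eq_big_seq (fun=> r)) => [|A /sPs/vertP/eqP //].
  by rewrite big_const_seq count_predT size_s iter_addn_0 mulnC.
have := leq_sum_card_bigcup uniq_s meet_le2.
have := subset_leq_card (subsetT (\bigcup_(A <- s) A)).
(* [set] identifies the two differently elaborated occurrences of the union for [lia]. *)
set U := \bigcup_(A <- s) A.
rewrite cardsT card_ord sum_r size_s (_ : 'C(4, 2) = 6) //; lia.
Qed.

Lemma exists_kneser_2packing_card3 n r : 1 < r -> n = 3 * r - 3 ->
  exists P : {set {set 'I_n}}, kneser_2packing r P /\ #|P| = 3.
Proof.
move=> r_gt1 n_def.
pose A : {set 'I_n} := [set i : 'I_n | 0 <= i < r].
pose B : {set 'I_n} := [set i : 'I_n | r - 1 <= i < 2 * r - 1].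
pose C : {set 'I_n} := ~: [set i : 'I_n | 0 < i < 2 * r - 2].
have cardA : #|A| = r by rewrite card_interval; lia.
have cardB : #|B| = r by rewrite card_interval; lia.
have cardC : #|C| = r by rewrite cardsCs setCK card_ord card_interval; lia.
have meetAB : #|A :&: B| = 1.
  have -> : A :&: B = [set i : 'I_n | r - 1 <= i < r].
    by apply/setP=> i; rewrite !inE; lia.
  by rewrite card_interval; lia.
have meetAC : #|A :&: C| = 1.
  have -> : A :&: C = [set i : 'I_n | 0 <= i < 1] by apply/setP=> i; rewrite !inE; lia.
  by rewrite card_interval; lia.
have meetBC : #|B :&: C| = 1.
  have -> : B :&: C = [set i : 'I_n | 2 * r - 2 <= i < 2 * r - 1].
    by apply/setP=> i; rewrite !inE; lia.
  by rewrite card_interval; lia.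
have neq (X Y : {set 'I_n}) : #|X| = r -> #|X :&: Y| = 1 -> X != Y.
  by move=> cardX meetXY; apply/eqP=> XY; move: meetXY; rewrite -XY setIid cardX; lia.
have far1 (X Y : {set 'I_n}) :
    #|X :&: Y| = 1 -> X :&: Y != set0 /\ #|X :&: Y| + n < 3 * r.
  by move=> meetXY; rewrite -card_gt0 meetXY; lia.
exists [set A; B; C]; rewrite -setUA; split; last first.
  by rewrite !cardsU1 cards1 !inE negb_or (neq A B) ?(neq A C) ?(neq B C).
apply/kneser_2packingP; split.
  by move=> X; rewrite !inE => /or3P[]/eqP->; apply/eqP.
move=> X Y; rewrite !inE => /or3P[]/eqP-> /or3P[]/eqP->; rewrite ?eqxx // => _.
all: by apply: far1; rewrite ?meetAB ?meetAC ?meetBC // setIC.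
Qed.

Theorem proposition4p2 (r : nat) : 10 <= r -> kneser_rho2_eq (3 * r - 3) r 3.
Proof.
move=> r_ge10; split; first by apply: exists_kneser_2packing_card3; lia.
by move=> P; apply: kneser_2packing_card_le3.
Qed.
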